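(* For $g=1$, the subspace $B_{(1)}\subset\mathfrak t_{(1)}(2)^{\times 2}$ is one-dimensional, spanned by $V=([t_{12},x^{(1)}],[t_{12},y^{(1)}])$.
   Context: $\mathbb K$ is a field of characteristic zero. For $n\ge1$, $\mathfrak t_{(1)}(n)$ is the Lie algebra generated by $x^{(i)},y^{(i)},t_{ij}$ ($1\le i,j\le n$) with relations: all $t_{ii}$ central; $t_{ij}=t_{ji}$; $[t_{ij},t_{kl}]=0$ for $i,j,k,l$ distinct; $[t_{ik}+t_{kj},t_{ij}]=0$ for $i,j,k$ distinct; $[x^{(i)},x^{(j)}]=[y^{(i)},y^{(j)}]=0$ for $i\ne j$; $[x^{(i)},y^{(j)}]=t_{ij}$ for $i\neq j$; $[x^{(i)},y^{(i)}]=-\sum_{j\neq i}t_{ij}$. For $v\in\mathfrak t_{(1)}(1)$, $v^{12}\in\mathfrak t_{(1)}(2)$ is the image under the Lie morphism with $x^{(1)}\mapsto x^{(1)}+x^{(2)}$, $y^{(1)}\mapsto y^{(1)}+y^{(2)}$, $t_{11}\mapsto t_{11}+t_{22}+t_{12}$. $B_{(1)}$ is the set of pairs $(V_a,V_b)$ for which there is $v\in\mathfrak t_{(1)}(1)$ with $V_a=[v^{12},x^{(1)}]$, $V_b=[v^{12},y^{(1)}]$. *)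

(* The Lie algebra t_(1)(n) is defined by generators and
   relations: formal Lie terms modulo the smallest congruence containing
   the Lie-algebra axioms (over a field K) and the defining relations. *)
From HB Require Import structures.
From mathcomp Require Import all_boot all_algebra.
Set Implicit Arguments. Unset Strict Implicit. Unset Printing Implicit Defensive.
Import GRing.Theory.
Local Open Scope ring_scope.

(* generators x^(i), y^(i), t_ij ; indices 1..n of the paper are 0..n-1 here *)
Inductive gen (n : nat) : Type :=
| gx of 'I_n
| gy of 'I_n
| gt of 'I_n & 'I_n.

Inductive lterm (K : Type) (n : nat) : Type :=
| LGen of gen n
| LZero
| LAdd of lterm K n & lterm K n
| LScale of K & lterm K n
| LBr of lterm K n & lterm K n.

Arguments LGen {K n}.
Arguments LZero {K n}.
Arguments LAdd {K n}.
Arguments LScale {K n}.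
Arguments LBr {K n}.

Definition xg {K : Type} {n : nat} (i : 'I_n) : lterm K n := LGen (gx i).
Definition yg {K : Type} {n : nat} (i : 'I_n) : lterm K n := LGen (gy i).
Definition tg {K : Type} {n : nat} (i j : 'I_n) : lterm K n := LGen (gt i j).

Definition lsum {K : Type} {n : nat} (s : seq (lterm K n)) : lterm K n :=
  foldr LAdd LZero s.

Inductive teq (K : fieldType) (n : nat) : lterm K n -> lterm K n -> Prop :=
| teq_refl a : teq a a
| teq_sym a b : teq a b -> teq b a
| teq_trans a b c : teq a b -> teq b c -> teq a c
| teq_add a a' b b' : teq a a' -> teq b b' -> teq (LAdd a b) (LAdd a' b')
| teq_scale k a a' : teq a a' -> teq (LScale k a) (LScale k a')
| teq_br a a' b b' : teq a a' -> teq b b' -> teq (LBr a b) (LBr a' b')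
| teq_addA a b c : teq (LAdd a (LAdd b c)) (LAdd (LAdd a b) c)
| teq_addC a b : teq (LAdd a b) (LAdd b a)
| teq_add0 a : teq (LAdd LZero a) a
| teq_addN a : teq (LAdd a (LScale (-1) a)) LZero
| teq_scale1 a : teq (LScale 1 a) a
| teq_scaleA k l a : teq (LScale k (LScale l a)) (LScale (k * l) a)
| teq_scaleDl k l a : teq (LScale (k + l) a) (LAdd (LScale k a) (LScale l a))
| teq_scaleDr k a b : teq (LScale k (LAdd a b)) (LAdd (LScale k a) (LScale k b))
| teq_brDl a b c : teq (LBr (LAdd a b) c) (LAdd (LBr a c) (LBr b c))
| teq_brDr a b c : teq (LBr a (LAdd b c)) (LAdd (LBr a b) (LBr a c))
| teq_brZl k a b : teq (LBr (LScale k a) b) (LScale k (LBr a b))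
| teq_brZr k a b : teq (LBr a (LScale k b)) (LScale k (LBr a b))
| teq_brvv a : teq (LBr a a) LZero
| teq_jacobi a b c :
    teq (LAdd (LBr a (LBr b c)) (LAdd (LBr b (LBr c a)) (LBr c (LBr a b)))) LZero
| teq_tii_central (i : 'I_n) a : teq (LBr (tg i i) a) LZero
| teq_tsym (i j : 'I_n) : teq (tg i j) (tg j i)
| teq_t4 (i j k l : 'I_n) : uniq [:: i; j; k; l] ->
    teq (LBr (tg i j) (tg k l)) LZero
| teq_t3 (i j k : 'I_n) : uniq [:: i; j; k] ->
    teq (LBr (LAdd (tg i k) (tg k j)) (tg i j)) LZero
| teq_xx (i j : 'I_n) : i != j -> teq (LBr (xg i) (xg j)) LZero
| teq_yy (i j : 'I_n) : i != j -> teq (LBr (yg i) (yg j)) LZero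
| teq_xy (i j : 'I_n) : i != j -> teq (LBr (xg i) (yg j)) (tg i j)
| teq_xyii (i : 'I_n) :
    teq (LBr (xg i) (yg i))
        (LScale (-1) (lsum [seq tg i j | j <- enum 'I_n & j != i])).

Fixpoint lift12 {K : Type} (v : lterm K 1) : lterm K 2 :=
  match v with
  | LGen (gx _) => LAdd (xg ord0) (xg ord_max)
  | LGen (gy _) => LAdd (yg ord0) (yg ord_max)
  | LGen (gt _ _) => LAdd (LAdd (tg ord0 ord0) (tg ord_max ord_max)) (tg ord0 ord_max)
  | LZero => LZero
  | LAdd a b => LAdd (lift12 a) (lift12 b)
  | LScale k a => LScale k (lift12 a)
  | LBr a b => LBr (lift12 a) (lift12 b)
  end.

Definition B1 (K : fieldType) (Va Vb : lterm K 2) : Prop :=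
  exists v : lterm K 1,
    teq Va (LBr (lift12 v) (xg ord0)) /\ teq Vb (LBr (lift12 v) (yg ord0)).

(* The morphism v |-> v^{12} sends the generators of t_(1)(1) to
   X = x1 + x2, Y = y1 + y2 and T = t11 + t22 + t12.  These three elements
   pairwise commute, so v^{12} = aX + bY + cT for some scalars.  X and Y
   commute with x1 and y1, and t11, t22 are central, hence
   [v^{12}, x1] = c [t12, x1] and [v^{12}, y1] = c [t12, y1]; v = c t11
   realises every such pair.  Finally [t12, x1] is nonzero: sending
   x_i to +-x, y_i to +-y, t12 to yx - xy and brackets to commutators
   defines a representation of t_(1)(2) in any algebra, and for suitable
   3x3 matrices the image of [t12, x1] does not vanish. *)
From mathcomp Require Import all_boot all_algebra.
From Stdlib Require Import Setoid Morphisms.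
Import GRing.Theory.
Local Open Scope ring_scope.

#[local] Instance teq_Equivalence (K : fieldType) (n : nat) :
  Equivalence (@teq K n).
Proof. split; [exact: teq_refl | exact: teq_sym | exact: teq_trans]. Qed.

#[local] Instance LAdd_Proper (K : fieldType) (n : nat) :
  Proper (@teq K n ==> @teq K n ==> @teq K n) LAdd.
Proof. by move=> ? ? ? ? ? ?; apply: teq_add. Qed.

#[local] Instance LScale_Proper (K : fieldType) (n : nat) (k : K) :
  Proper (@teq K n ==> @teq K n) (LScale k).
Proof. by move=> ? ? ?; apply: teq_scale. Qed.

#[local] Instance LBr_Proper (K : fieldType) (n : nat) :
  Proper (@teq K n ==> @teq K n ==> @teq K n) LBr.
Proof. by move=> ? ? ? ? ? ?; apply: teq_br. Qed.

#[local] Hint Resolve teq_refl : core.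

Section LieAlgebraLaws.
Context {K : fieldType} {n : nat}.
Implicit Types (a b c u : lterm K n) (k : K).
Local Notation "a === b" := (@teq K n a b) (at level 70).

Lemma teq_addr0 a : LAdd a LZero === a.
Proof. by rewrite teq_addC teq_add0. Qed.

Lemma teq_addNl a : LAdd (LScale (-1) a) a === LZero.
Proof. by rewrite teq_addC teq_addN. Qed.

Lemma teq_addACA a b c u :
  LAdd (LAdd a b) (LAdd c u) === LAdd (LAdd a c) (LAdd b u).
Proof.
by rewrite -(teq_addA a) (teq_addA b) (teq_addC b c) -(teq_addA c) teq_addA.
Qed.

Lemma teq_addIr a b c : LAdd a c === LAdd b c -> a === b.
Proof.
move=> eq_ac_bc.
by rewrite -(teq_addr0 a) -(teq_addr0 b) -(teq_addN c) !teq_addA eq_ac_bc.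
Qed.

Lemma teq_scale0 u : LScale 0 u === LZero.
Proof.
by apply: (@teq_addIr _ _ (LScale 0 u)); rewrite -teq_scaleDl addr0 teq_add0.
Qed.

Lemma teq_scaler0 k : LScale k (@LZero K n) === LZero.
Proof.
by apply: (@teq_addIr _ _ (LScale k LZero)); rewrite -teq_scaleDr !teq_add0.
Qed.

Lemma teq_br0r u : LBr u LZero === LZero.
Proof.
by apply: (@teq_addIr _ _ (LBr u LZero)); rewrite -teq_brDr !teq_add0.
Qed.

Lemma teq_brC a b : LBr a b === LScale (-1) (LBr b a).
Proof.
have brD0 : LAdd (LBr a b) (LBr b a) === LZero.
  by rewrite -(teq_brvv (LAdd a b)) teq_brDl !teq_brDr !teq_brvv teq_add0
             teq_addr0.
by apply: (@teq_addIr _ _ (LBr b a)); rewrite brD0 teq_addNl.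
Qed.

Lemma teq_brC0 a b : LBr a b === LZero -> LBr b a === LZero.
Proof. by move=> ab0; rewrite teq_brC ab0 teq_scaler0. Qed.

Lemma teq_br_br0 u a b :
  LBr u a === LZero -> LBr u b === LZero -> LBr u (LBr a b) === LZero.
Proof.
move=> ua0 /teq_brC0 bu0; have jac := teq_jacobi u a b.
by rewrite bu0 ua0 !teq_br0r !teq_addr0 in jac.
Qed.

End LieAlgebraLaws.

Lemma enum_I2_neq0 : [seq j <- enum 'I_2 | j != ord0] = [:: ord_max].
Proof. by rewrite !enum_ordSl enum_ord0 /=; apply/eqP. Qed.

Lemma enum_I2_neq1 : [seq j <- enum 'I_2 | j != ord_max] = [:: ord0].
Proof. by rewrite !enum_ordSl enum_ord0. Qed.

Lemma ord2P (i : 'I_2) : i = ord0 \/ i = ord_max.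
Proof. by case: i => [[|[|k]] lt_i2]; [left | right |]; try exact: val_inj. Qed.

Lemma uniq_size_I2 (s : seq 'I_2) : uniq s -> (size s <= 2)%N.
Proof. by move/card_uniqP <-; apply: leq_trans (max_card _) _; rewrite card_ord. Qed.

Section TwoPoints.
Variable K : fieldType.
Local Notation "a === b" := (@teq K 2 a b) (at level 70).
Local Notation o := (ord0 : 'I_2).
Local Notation m := (ord_max : 'I_2).
Local Notation t := (@tg K 2 o m).
Local Notation X := (LAdd (@xg K 2 o) (xg m)).
Local Notation Y := (LAdd (@yg K 2 o) (yg m)).
Local Notation T := (LAdd (LAdd (@tg K 2 o o) (tg m m)) (tg o m)).

Lemma br_x1y2 : LBr (xg o) (yg m) === t.
Proof. exact: teq_xy. Qed.

Lemma br_x2y1 : LBr (xg m) (yg o) === t.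
Proof. by rewrite teq_xy // teq_tsym. Qed.

Lemma br_x1y1 : LBr (xg o) (yg o) === LScale (-1) t.
Proof. by rewrite teq_xyii /= enum_I2_neq0 /= teq_addr0. Qed.

Lemma br_x2y2 : LBr (xg m) (yg m) === LScale (-1) t.
Proof. by rewrite teq_xyii /= enum_I2_neq1 /= teq_addr0 teq_tsym. Qed.

Lemma br_X_x1 : LBr X (xg o) === LZero.
Proof. by rewrite teq_brDl teq_brvv teq_xx // teq_add0. Qed.

Lemma br_X_y1 : LBr X (yg o) === LZero.
Proof. by rewrite teq_brDl br_x1y1 br_x2y1 teq_addNl. Qed.

Lemma br_X_y2 : LBr X (yg m) === LZero.
Proof. by rewrite teq_brDl br_x1y2 br_x2y2 teq_addN. Qed.

Lemma br_Y_x1 : LBr Y (xg o) === LZero.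
Proof.
by rewrite teq_brDl (teq_brC (yg o)) (teq_brC (yg m)) br_x1y1 br_x1y2
  teq_scaleA mulrNN mulr1 teq_scale1 teq_addN.
Qed.

Lemma br_Y_y1 : LBr Y (yg o) === LZero.
Proof. by rewrite teq_brDl teq_brvv teq_yy // teq_add0. Qed.

Lemma br_Y_y2 : LBr Y (yg m) === LZero.
Proof. by rewrite teq_brDl teq_brvv teq_yy // teq_addr0. Qed.

Lemma br_X_t : LBr X t === LZero.
Proof. by rewrite -br_x1y2; apply: teq_br_br0; [apply: br_X_x1 | apply: br_X_y2]. Qed.

Lemma br_Y_t : LBr Y t === LZero.
Proof. by rewrite -br_x1y2; apply: teq_br_br0; [apply: br_Y_x1 | apply: br_Y_y2]. Qed.

Lemma br_X_Y : LBr X Y === LZero.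
Proof. by rewrite teq_brDr br_X_y1 br_X_y2 teq_add0. Qed.

Lemma br_T u : LBr T u === LBr t u.
Proof. by rewrite !teq_brDl !teq_tii_central !teq_add0. Qed.

Lemma br_X_T : LBr X T === LZero.
Proof. by apply: teq_brC0; rewrite br_T; apply: teq_brC0; apply: br_X_t. Qed.

Lemma br_Y_T : LBr Y T === LZero.
Proof. by apply: teq_brC0; rewrite br_T; apply: teq_brC0; apply: br_Y_t. Qed.

Definition comb (a b c : K) : lterm K 2 :=
  LAdd (LScale a X) (LAdd (LScale b Y) (LScale c T)).

Lemma comb_br (a b c a' b' c' : K) : LBr (comb a b c) (comb a' b' c') === LZero.
Proof.
have /teq_brC0 br_Y_X := br_X_Y; have /teq_brC0 br_T_X := br_X_T.
have /teq_brC0 br_T_Y := br_Y_T.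
rewrite /comb !teq_brDl !teq_brDr !teq_brZl !teq_brZr !teq_brvv.
by rewrite br_X_Y br_X_T br_Y_X br_Y_T br_T_X br_T_Y !teq_scaler0 !teq_add0.
Qed.

Lemma lift12_comb (v : lterm K 1) : exists a b c, lift12 v === comb a b c.
Proof.
elim: v => [[i|i|i j]| |v1 IHv1 v2 IHv2|k v IHv|v1 IHv1 v2 IHv2] /=.
- by exists 1, 0, 0; rewrite /comb !teq_scale0 teq_scale1 !teq_addr0.
- by exists 0, 1, 0; rewrite /comb !teq_scale0 teq_scale1 teq_addr0 teq_add0.
- by exists 0, 0, 1; rewrite /comb !teq_scale0 teq_scale1 !teq_add0.
- by exists 0, 0, 0; rewrite /comb !teq_scale0 !teq_addr0.
- have [a1 [b1 [c1 eq1]]] := IHv1; have [a2 [b2 [c2 eq2]]] := IHv2.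
  exists (a1 + a2), (b1 + b2), (c1 + c2).
  rewrite eq1 eq2 /comb !teq_scaleDl teq_addACA.
  by apply: teq_add => //; apply: teq_addACA.
- have [a [b [c eq_v]]] := IHv; exists (k * a), (k * b), (k * c).
  by rewrite eq_v /comb !teq_scaleDr !teq_scaleA.
- have [a1 [b1 [c1 eq1]]] := IHv1; have [a2 [b2 [c2 eq2]]] := IHv2.
  by exists 0, 0, 0; rewrite eq1 eq2 comb_br /comb !teq_scale0 !teq_addr0.
Qed.

Lemma comb_br_T (a b c : K) u :
  LBr X u === LZero -> LBr Y u === LZero ->
  LBr (comb a b c) u === LScale c (LBr t u).
Proof.
move=> Xu0 Yu0.
by rewrite /comb !teq_brDl !teq_brZl Xu0 Yu0 br_T !teq_scaler0 !teq_add0.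
Qed.

Lemma comb_br_x1 (a b c : K) :
  LBr (comb a b c) (xg o) === LScale c (LBr t (xg o)).
Proof. exact: comb_br_T br_X_x1 br_Y_x1. Qed.

Lemma comb_br_y1 (a b c : K) :
  LBr (comb a b c) (yg o) === LScale c (LBr t (yg o)).
Proof. exact: comb_br_T br_X_y1 br_Y_y1. Qed.

Lemma B1E (Va Vb : lterm K 2) : B1 Va Vb <->
  exists c : K, Va === LScale c (LBr t (xg o)) /\ Vb === LScale c (LBr t (yg o)).
Proof.
split.
- case=> v [eq_a eq_b]; have [a [b [c eq_v]]] := lift12_comb v.
  by exists c; rewrite eq_a eq_b eq_v comb_br_x1 comb_br_y1.
- case=> c [eq_a eq_b]; exists (LScale c (tg ord0 ord0)).
  have -> : lift12 (LScale c (tg ord0 ord0)) === comb 0 0 c.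
    by rewrite /comb /= !teq_scale0 !teq_add0.
  by rewrite eq_a eq_b comb_br_x1 comb_br_y1.
Qed.

End TwoPoints.

Lemma commr_jacobi (R : pzRingType) (a b c : R) :
  a * (b * c - c * b) - (b * c - c * b) * a
  + (b * (c * a - a * c) - (c * a - a * c) * b
     + (c * (a * b - b * a) - (a * b - b * a) * c)) = 0.
Proof.
rewrite !mulrBr !mulrBl !mulrA.
move: (a * b * c) (a * c * b) (b * c * a) (c * b * a) (b * a * c) (c * a * b).
move=> abc acb bca cba bac cab; rewrite !opprB !addrA !subrK.
by rewrite (addrAC _ _ acb) (addrAC _ _ acb) subrK (addrAC _ _ (- cba)) addrK subrK subrr.
Qed.

Section Representation.
Context {K : fieldType} {A : algType K} (x y : A).

Definition rep_gen (g : gen 2) : A :=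
  match g with
  | gx i => if i == ord0 then x else - x
  | gy i => if i == ord0 then y else - y
  | gt i j => if i == j then 0 else y * x - x * y
  end.

Fixpoint rep (u : lterm K 2) : A :=
  match u with
  | LGen g => rep_gen g
  | LZero => 0
  | LAdd a b => rep a + rep b
  | LScale k a => k *: rep a
  | LBr a b => rep a * rep b - rep b * rep a
  end.

Lemma rep_teq (a b : lterm K 2) : teq a b -> rep a = rep b.
Proof.
elim=> //=.
- by move=> ? ? ? _ -> _ ->.
- by move=> ? ? ? ? _ -> _ ->.
- by move=> ? ? ? _ ->.
- by move=> ? ? ? ? _ -> _ ->.
- by move=> *; rewrite addrA.
- by move=> *; rewrite addrC.
- by move=> *; rewrite add0r.
- by move=> *; rewrite scaleN1r subrr.
- by move=> *; rewrite scale1r.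
- by move=> *; rewrite scalerA.
- by move=> *; rewrite scalerDl.
- by move=> *; rewrite scalerDr.
- by move=> *; rewrite mulrDl mulrDr opprD addrACA.
- by move=> *; rewrite mulrDl mulrDr opprD addrACA.
- by move=> *; rewrite -scalerAl -scalerAr scalerBr.
- by move=> *; rewrite -scalerAl -scalerAr scalerBr.
- by move=> *; rewrite subrr.
- by move=> ? ? ?; apply: commr_jacobi.
- by move=> *; rewrite eqxx mul0r mulr0 subrr.
- by move=> *; rewrite eq_sym.
- by move=> i j k l /(@uniq_size_I2 [:: i; j; k; l]).
- by move=> i j k /(@uniq_size_I2 [:: i; j; k]).
- by move=> i j; case: (ord2P i) => ->; case: (ord2P j) => -> //= _;
    rewrite mulrN mulNr subrr.
- by move=> i j; case: (ord2P i) => ->; case: (ord2P j) => -> //= _;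
    rewrite mulrN mulNr subrr.
- by move=> i j; case: (ord2P i) => ->; case: (ord2P j) => -> //= _;
    rewrite mulrN mulNr opprK addrC.
- move=> i; case: (ord2P i) => -> /=.
    by rewrite enum_I2_neq0 /= addr0 scaleN1r opprB.
  by rewrite enum_I2_neq1 /= addr0 scaleN1r opprB !mulrNN.
Qed.

End Representation.

Definition mx_x (K : fieldType) : 'M[K]_3 := delta_mx 0 1 + delta_mx 1 2.
Definition mx_y (K : fieldType) : 'M[K]_3 := delta_mx 2 2.

(* t12 is represented by -E_12, and [t12, x1] by E_02. *)
Lemma rep_t12_x1_neq0 (K : fieldType) :
  rep (mx_x K) (mx_y K) (LBr (tg ord0 ord_max) (xg ord0)) != 0.
Proof.
rewrite /= /mx_x /mx_y -!mulmxE !mulmxDl !mulmxDr !mul_delta_mx.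
rewrite !mul_delta_mx_0 // !add0r !mul0mx !mulmx0 !mulNmx !mulmxN.
rewrite !mul_delta_mx ?mul_delta_mx_0 // !oppr0 !addr0 !add0r opprK.
by apply/eqP => /matrixP /(_ 0 2) /eqP; rewrite !mxE /= oner_eq0.
Qed.

Theorem lemma11p7 (K : fieldType) (charK : [pchar K] =i pred0) :
  let Va : lterm K 2 := LBr (tg ord0 ord_max) (xg ord0) in
  let Vb : lterm K 2 := LBr (tg ord0 ord_max) (yg ord0) in
  ~ (teq Va LZero /\ teq Vb LZero) /\
  (forall a b : lterm K 2,
     B1 a b <-> exists c : K, teq a (LScale c Va) /\ teq b (LScale c Vb)).
Proof.
move=> Va Vb; split; last exact: B1E.
case=> /(rep_teq (mx_x K) (mx_y K)) Va0 _.
by move: (rep_t12_x1_neq0 K); rewrite Va0 eqxx.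
Qed.
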